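(* Let $r\ge4$ and $s\ge1$ be integers and consider the lexicographic product $C_r[K_s]$. If $H$ is a connected induced regular subgraph of $C_r[K_s]$ of degree $d$, then either (i) $H$ is a clique of order $d+1$, with $0\le d\le 2s-1$; or (ii) $r(d+1)/3$ is an integer, $2\le d\le 3s-1$, $H$ has order $r(d+1)/3$, and every vertex of $C_r[K_s]$ is adjacent to some vertex of $H$. Conversely, for every $d$ with $0\le d\le 2s-1$ there is a connected induced regular subgraph of degree $d$ of type (i), and for every $d$ with $2\le d\le 3s-1$ such that $r(d+1)/3$ is an integer there is a connected induced regular subgraph of degree $d$ of type (ii).
   Context: Graphs are finite and simple. $C_r$ is the cycle on $r$ vertices and $K_s$ the complete graph on $s$ vertices. The lexicographic product $G[H]$ has vertex set $V(G)\times V(H)$, with $(a,b)$ adjacent to $(a',b')$ iff $a$ is adjacent to $a'$ in $G$, or $a=a'$ and $b$ is adjacent to $b'$ in $H$. Thus $C_r[K_s]$ consists of $r$ cliques of order $s$ arranged cyclically, with all edges between cyclically consecutive cliques. A regular subgraph of degree $d$ is one in which every vertex has exactly $d$ neighbours in the subgraph. *)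

From mathcomp Require Import all_boot.
Set Implicit Arguments. Unset Strict Implicit. Unset Printing Implicit Defensive.

(* Vertices of C_r[K_s]: pairs (a, b) with a : 'I_r (position on the cycle)
   and b : 'I_s (position in the clique). *)
Definition lexV (r s : nat) := ('I_r * 'I_s)%type.

Definition cyc_adj (r : nat) (a a' : 'I_r) : bool :=
  ((a.+1 %% r) == a') || ((a'.+1 %% r) == a).

Definition lex_adj (r s : nat) : rel (lexV r s) :=
  fun x y => cyc_adj x.1 y.1 || ((x.1 == y.1) && (x.2 != y.2)).

Section Sub.
Variables (T : finType) (e : rel T).

Definition induced_regular (S : {set T}) (d : nat) : Prop :=
  forall v, v \in S -> #|[set w in S | e v w]| = d.

Definition induced_connected (S : {set T}) : Prop :=
  S != set0 /\
  {in S &, forall u v, connect (fun x y => [&& x \in S, y \in S & e x y]) u v}.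

Definition is_clique (S : {set T}) : Prop :=
  {in S &, forall u v, u != v -> e u v}.

Definition every_vertex_adjacent (S : {set T}) : Prop :=
  forall v, exists2 w, w \in S & e v w.
End Sub.

From mathcomp Require Import all_boot zify.
Set Implicit Arguments. Unset Strict Implicit. Unset Printing Implicit Defensive.

(* Let n_i be the number of vertices of S in layer i (the cycle coordinate).
   A vertex in layer k+1 is adjacent to all other vertices of layers k, k+1,
   k+2 and to nothing else, so d-regularity says n_k + n_{k+1} + n_{k+2} = d+1
   whenever n_{k+1} > 0.  If every layer is occupied, all these windows equal
   d+1; summing them around the cycle gives 3|S| = r(d+1), and every vertex
   of the host graph sees the next layer.  If some layer j is empty while
   n_{j+1} > 0, then n_{j+2} > 0 forces n_{j+3} = 0, so by connectivity S
   lies in the two consecutive layers j+1, j+2 and is a clique of order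
   d+1 <= 2s.  Conversely, sets with prescribed layer counts realise both
   types: a clique spread over layers 1 and 2, and the counts
   (d+3 - i mod 3) / 3, which split d+1 evenly over any three consecutive
   layers as soon as 3 | d+1 or 3 | r. *)

Section InducedSubgraphs.
Variables (T : finType) (e : rel T).

Lemma card_set_sum (S : {set T}) (P : pred T) :
  #|[set w in S | P w]| = \sum_(w in S) P w.
Proof.
rewrite -sum1_card big_mkcond [RHS]big_mkcond; apply: eq_bigr => w _.
by rewrite inE; case: (w \in S); case: (P w).
Qed.

Lemma clique_nbr_card (S : {set T}) v :
  irreflexive e -> is_clique e S -> v \in S -> #|[set w in S | e v w]|.+1 = #|S|.
Proof.
move=> irr cl vS; rewrite (cardsD1 v S) vS add1n; congr _.+1; apply: eq_card => w.
rewrite !inE; have [->|wv] := eqVneq w v; first by rewrite irr andbF.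
by apply/andP/idP => [[]//|wS]; split; last by apply: cl; rewrite // eq_sym.
Qed.

Lemma clique_regular (S : {set T}) d :
  irreflexive e -> is_clique e S -> #|S| = d.+1 -> induced_regular e S d.
Proof. by move=> irr cl Sd v vS; apply: succn_inj; rewrite clique_nbr_card. Qed.

Lemma clique_connected (S : {set T}) :
  is_clique e S -> S != set0 -> induced_connected e S.
Proof.
move=> cl S0; split=> // u v uS vS; have [->|uv] := eqVneq u v; first exact: connect0.
by apply: connect1; rewrite uS vS cl.
Qed.

Lemma induced_connected_sub (S B : {set T}) x :
  symmetric e -> induced_connected e S -> x \in S -> x \in B ->
  {in S &, forall y z, e y z -> y \in B -> z \in B} -> S \subset B.
Proof.
move=> sym_e [_ connS] xS xB closB; apply/subsetP => y yS.
have clB : closed (fun y z => [&& y \in S, z \in S & e y z]) B.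
  move=> y' z /and3P[y'S zS y'z]; apply/idP/idP; first exact: closB.
  by apply: closB; rewrite // sym_e.
by rewrite -(closed_connect clB (connS _ _ xS yS)).
Qed.

End InducedSubgraphs.

Lemma card_ord_ltn n m : m <= n -> #|[set i : 'I_n | i < m]| = m.
Proof.
move=> mn; have -> : [set i : 'I_n | i < m] = widen_ord mn @: [set: 'I_m].
  apply/setP => i; rewrite inE.
  apply/idP/imsetP => [im|[j _ ->]]; last exact: (ltn_ord j).
  by exists (Ordinal im); rewrite ?inE //; apply: val_inj.
by rewrite card_imset ?cardsT ?card_ord // => i j /(congr1 val) /= /val_inj.
Qed.

Section Layers.
Variables r s : nat.
Hypothesis r_gt2 : 2 < r.
Local Notation V := (lexV r s).
Local Notation adj := (@lex_adj r s).

Lemma r_gt0 : 0 < r. Proof. exact: ltnW (ltnW r_gt2). Qed.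

Definition layer (k : nat) : 'I_r := Ordinal (ltn_pmod k r_gt0).

Lemma layer_eq k l : (layer k == layer l) = (k == l %[mod r]).
Proof. by rewrite -val_eqE. Qed.

Lemma layer_ord (a : 'I_r) : layer a = a.
Proof. by apply: val_inj; rewrite /= modn_small. Qed.

Lemma layerS_surj (a : 'I_r) : exists k, a = layer k.+1.
Proof.
exists (a + r.-1); apply: val_inj.
by rewrite /= -addnS prednK ?r_gt0 // modnDr modn_small.
Qed.

Lemma layer_addn_neq k i : 0 < i < r -> layer (k + i) != layer k.
Proof.
move=> /andP[i_gt0 i_ltr]; rewrite layer_eq -[X in _ == X %[mod _]]addn0 eqn_modDl.
by rewrite mod0n modn_small // -lt0n.
Qed.

Lemma layer_succ_neq k : (layer k.+1 == layer k) = false.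
Proof. by apply/negbTE; rewrite -addn1 layer_addn_neq // (ltn_trans _ r_gt2). Qed.

Lemma layer_succ2_neq k : (layer k.+2 == layer k) = false.
Proof. by apply/negbTE; rewrite -addn2 layer_addn_neq. Qed.

Definition layer_neqE k :=
  (layer_succ_neq k, layer_succ2_neq k, layer_succ_neq k.+1,
   etrans (eq_sym (layer k) _) (layer_succ_neq k),
   etrans (eq_sym (layer k) _) (layer_succ2_neq k),
   etrans (eq_sym (layer k.+1) _) (layer_succ_neq k.+1)).

Lemma cyc_adj_layer k a : cyc_adj (layer k.+1) a = (a == layer k) || (a == layer k.+2).
Proof.
rewrite /cyc_adj orbC; congr (_ || _).
  by rewrite -val_eqE /= -[a.+1]addn1 -[k.+1]addn1 eqn_modDr modn_small.
by rewrite eq_sym -val_eqE /= -[(k.+1 %% r).+1]addn1 modnDml addn1.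
Qed.

Lemma cyc_adj_irr : irreflexive (@cyc_adj r).
Proof.
by move=> a; have [k ->] := layerS_surj a; rewrite cyc_adj_layer !(layer_neqE k).
Qed.

Lemma lex_adj_sym : symmetric adj.
Proof.
move=> x y; rewrite /lex_adj /cyc_adj (eq_sym x.1) (eq_sym x.2).
by case: (_ == _); case: (_ == _); rewrite ?orbT.
Qed.

Lemma lex_adj_layer_eq (u w : V) : u.1 = w.1 -> adj u w = (u != w).
Proof.
by case: u w => [a b] [a' b'] /= <-; rewrite /lex_adj /= cyc_adj_irr xpair_eqE eqxx.
Qed.

Lemma lex_adj_irr : irreflexive adj.
Proof. by move=> v; rewrite lex_adj_layer_eq ?eqxx. Qed.

Definition layer_card (S : {set V}) (i : 'I_r) := #|[set v in S | v.1 == i]|.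

Definition layer_window (S : {set V}) k :=
  layer_card S (layer k) + layer_card S (layer k.+1) + layer_card S (layer k.+2).

Lemma closed_nbr_indicator (v w : V) k : v.1 = layer k.+1 ->
  (w == v) + adj v w = (w.1 == layer k) + (w.1 == layer k.+1) + (w.1 == layer k.+2).
Proof.
case: v => a b /= ->; case: w => a' b' /=; rewrite /lex_adj /= cyc_adj_layer xpair_eqE.
have [->|_] := eqVneq a' (layer k); first by rewrite !(layer_neqE k).
have [->|_] := eqVneq a' (layer k.+2); first by rewrite !(layer_neqE k).
have [_|//] := eqVneq a' (layer k.+1).
by rewrite /= eq_sym; case: eqP.
Qed.

Lemma layer_degree (S : {set V}) v k : v \in S -> v.1 = layer k.+1 ->
  #|[set w in S | adj v w]|.+1 = layer_window S k.
Proof.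
move=> vS vk; have v1 : \sum_(w in S) (w == v) = 1.
  by rewrite -card_set_sum (_ : [set w in S | w == v] = [set v]) ?cards1 //;
     apply/setP => w; rewrite !inE andbC; case: eqP => // ->.
rewrite /layer_window /layer_card !card_set_sum -add1n -v1 -!big_split /=.
by apply: eq_bigr => w _; rewrite (closed_nbr_indicator _ vk).
Qed.

Lemma layer_card_le (S : {set V}) i : layer_card S i <= s.
Proof.
rewrite -[s]card_ord; apply: (@leq_card_in _ _ snd) => v w.
rewrite !inE => /andP[_ /eqP vi] /andP[_ /eqP wi] v2w2.
by rewrite [v]surjective_pairing [w]surjective_pairing vi wi v2w2.
Qed.

Lemma layer_card_gt0P (S : {set V}) i :
  reflect (exists2 v, v \in S & v.1 = i) (0 < layer_card S i).
Proof.
apply: (iffP card_gt0P) => [[v]|[v vS vi]].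
  by rewrite inE => /andP[vS /eqP vi]; exists v.
by exists v; rewrite inE vS vi /=.
Qed.

Lemma layer_card_eq0 (S : {set V}) i v :
  layer_card S i = 0 -> v \in S -> (v.1 == i) = false.
Proof.
move=> Si0 vS; apply/negbTE/negP => /eqP vi.
suff: 0 < layer_card S i by rewrite Si0.
by apply/layer_card_gt0P; exists v.
Qed.

Lemma card_layer_sum (S : {set V}) : #|S| = \sum_(i < r) layer_card S i.
Proof.
rewrite -sum1_card (partition_big fst predT) //=; apply: eq_bigr => i _.
by rewrite /layer_card -sum1_card; apply: eq_bigl => v; rewrite inE.
Qed.

Lemma sum_layer_shift (F : 'I_r -> nat) c :
  \sum_(i < r) F (layer (i + c)) = \sum_(i < r) F i.
Proof.
have inj : injective (fun i : 'I_r => layer (i + c)).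
  by move=> i j /eqP; rewrite layer_eq eqn_modDr !modn_small // => /eqP /val_inj.
by rewrite [RHS](reindex_inj inj).
Qed.

Lemma regular_layer_window (S : {set V}) d k : induced_regular adj S d ->
  0 < layer_card S (layer k.+1) -> layer_window S k = d.+1.
Proof. by move=> reg /layer_card_gt0P[v vS vk]; rewrite -(layer_degree vS vk) reg. Qed.

Lemma card_const_layer_window (S : {set V}) c :
  (forall k, layer_window S k = c) -> 3 * #|S| = r * c.
Proof.
move=> win; have shift k : \sum_(i < r) layer_card S (layer (i + k)) = #|S|.
  by rewrite sum_layer_shift -card_layer_sum.
transitivity (\sum_(i < r) (layer_card S (layer (i + 0)) +
                layer_card S (layer (i + 1)) + layer_card S (layer (i + 2)))).
  by rewrite !big_split /= !shift !mulSn mul0n addn0 addnA.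
transitivity (\sum_(i < r) c); last by rewrite sum_nat_const card_ord mulnC.
by apply: eq_bigr => i _; rewrite addn0 addn1 addn2; apply: win.
Qed.

Lemma regular_full_layers (S : {set V}) d :
  induced_regular adj S d -> (forall i, 0 < layer_card S i) ->
  3 %| r * d.+1 /\ 2 <= d /\ d.+1 <= 3 * s /\
  #|S| = r * d.+1 %/ 3 /\ every_vertex_adjacent adj S.
Proof.
move=> reg full; have win k := regular_layer_window reg (full (layer k.+1)).
have card3 := card_const_layer_window win.
have [d_ge2 d_le] : 2 <= d /\ d.+1 <= 3 * s.
  have := win 0; rewrite /layer_window.
  have := full (layer 0); have := full (layer 1); have := full (layer 2).
  have := layer_card_le S (layer 0); have := layer_card_le S (layer 1).
  have := layer_card_le S (layer 2); lia.
split; first by rewrite -card3 dvdn_mulr.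
split=> //; split=> //; split; first by rewrite -card3 mulKn.
move=> v; have [k vk] := layerS_surj v.1.
have /layer_card_gt0P[w wS wk] := full (layer k.+2).
by exists w; rewrite // /lex_adj vk cyc_adj_layer wk eqxx orbT.
Qed.

Lemma empty_layer_boundary (S : {set V}) i0 : S != set0 -> layer_card S i0 = 0 ->
  exists j, layer_card S (layer j) = 0 /\ 0 < layer_card S (layer j.+1).
Proof.
move=> /set0Pn[v vS] Si0.
have ex : exists m, 0 < layer_card S (layer (i0 + m)).
  exists (v.1 + r - i0); rewrite subnKC; last by rewrite ltnW // ltn_addl.
  have -> : layer (v.1 + r) = v.1 by apply: val_inj; rewrite /= modnDr modn_small.
  by apply/layer_card_gt0P; exists v.
have [[|m] Sm min_m] := ex_minnP ex; first by rewrite addn0 layer_ord Si0 in Sm.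
exists (i0 + m); split; last by rewrite -addnS.
by apply/eqP; rewrite -leqn0 leqNgt; apply/negP => /min_m; rewrite ltnn.
Qed.

Lemma empty_layer_after_pair (S : {set V}) d j : induced_regular adj S d ->
  layer_card S (layer j) = 0 -> 0 < layer_card S (layer j.+1) ->
  0 < layer_card S (layer j.+2) -> layer_card S (layer j.+3) = 0.
Proof.
move=> reg Sj Sj1 Sj2.
have := regular_layer_window reg Sj1; have := regular_layer_window reg Sj2.
rewrite /layer_window Sj; lia.
Qed.

Definition layer_pair j : {set V} := [set v | (v.1 == layer j.+1) || (v.1 == layer j.+2)].

Lemma layer_pair_clique (S : {set V}) j : S \subset layer_pair j -> is_clique adj S.
Proof.
move=> /subsetP sub u w uS wS uw; have [uw1|] := eqVneq u.1 w.1.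
  by rewrite lex_adj_layer_eq.
move: (sub u uS) (sub w wS); rewrite !inE /lex_adj.
by do 2!case/orP=> /eqP->; rewrite ?eqxx // cyc_adj_layer eqxx ?orbT.
Qed.

Lemma regular_sub_layer_pair (S : {set V}) d j :
  induced_connected adj S -> induced_regular adj S d ->
  layer_card S (layer j) = 0 -> 0 < layer_card S (layer j.+1) -> S \subset layer_pair j.
Proof.
move=> conn reg Sj Sj1; have /layer_card_gt0P[v vS vj] := Sj1.
apply: (induced_connected_sub lex_adj_sym conn vS); first by rewrite inE vj eqxx.
move=> x y xS yS; rewrite /lex_adj !inE => xy /orP[]/eqP x1; move: xy; rewrite x1.
  rewrite cyc_adj_layer (layer_card_eq0 Sj yS) /=.
  by case/orP=> [->|/andP[/eqP<- _]]; rewrite ?eqxx ?orbT.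
have Sj2 : 0 < layer_card S (layer j.+2) by apply/layer_card_gt0P; exists x.
rewrite cyc_adj_layer (layer_card_eq0 (empty_layer_after_pair reg Sj Sj1 Sj2) yS) orbF.
by case/orP=> [->|/andP[/eqP<- _]]; rewrite ?eqxx ?orbT.
Qed.

Lemma regular_empty_layer_clique (S : {set V}) d i0 :
  induced_connected adj S -> induced_regular adj S d -> layer_card S i0 = 0 ->
  is_clique adj S /\ #|S| = d.+1 /\ d.+1 <= 2 * s.
Proof.
move=> conn reg Si0; have [j [Sj Sj1]] := empty_layer_boundary conn.1 Si0.
have cl := layer_pair_clique (regular_sub_layer_pair conn reg Sj Sj1).
have /layer_card_gt0P[v vS _] := Sj1.
split=> //; split; first by rewrite -(clique_nbr_card lex_adj_irr cl vS) reg.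
have := regular_layer_window reg Sj1; rewrite /layer_window Sj.
have := layer_card_le S (layer j.+1); have := layer_card_le S (layer j.+2); lia.
Qed.

Lemma regular_connected_cases (S : {set V}) d :
  induced_connected adj S -> induced_regular adj S d ->
  (is_clique adj S /\ #|S| = d.+1 /\ d.+1 <= 2 * s) \/
  (3 %| r * d.+1 /\ 2 <= d /\ d.+1 <= 3 * s /\
   #|S| = r * d.+1 %/ 3 /\ every_vertex_adjacent adj S).
Proof.
move=> conn reg; have [/forallP full|] := boolP [forall i, 0 < layer_card S i].
  by right; exact: regular_full_layers reg full.
case/forallPn => i; rewrite lt0n negbK => /eqP Si.
by left; exact: regular_empty_layer_clique conn reg Si.
Qed.

Definition stack (f : 'I_r -> nat) : {set V} := [set v : V | v.2 < f v.1].

Lemma layer_card_stack f i : f i <= s -> layer_card (stack f) i = f i.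
Proof.
move=> fi_le; have inj : injective (pair i : 'I_s -> V) by move=> x y [].
rewrite /layer_card -[RHS](card_ord_ltn fi_le) -(card_imset _ inj).
apply: eq_card => v; rewrite !inE; apply/idP/imsetP => [/andP[vf /eqP vi]|[b]].
  by exists v.2; rewrite ?inE -?vi //; case: v {vf vi}.
by rewrite inE => bf ->; rewrite /= bf eqxx.
Qed.

Lemma stack_regular f d : (forall i, f i <= s) ->
  (forall k, f (layer k) + f (layer k.+1) + f (layer k.+2) = d.+1) ->
  induced_regular adj (stack f) d.
Proof.
move=> f_le win v vS; have [k vk] := layerS_surj v.1.
by apply: succn_inj; rewrite (layer_degree vS vk) /layer_window !layer_card_stack.
Qed.

Lemma stack_connected f : 0 < s -> (forall i, 0 < f i) -> induced_connected adj (stack f).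
Proof.
move=> s_gt0 f_gt0; pose b0 : 'I_s := Ordinal s_gt0.
have b0S i : (i, b0) \in stack f by rewrite inE f_gt0.
pose eS x y := [&& x \in stack f, y \in stack f & adj x y].
have to_base m u : u \in stack f -> u.1 = layer m -> connect eS u (layer 0, b0).
  elim: m u => [|m IH] u uS um.
    have [->|ne] := eqVneq u (layer 0, b0); first exact: connect0.
    by apply: connect1; rewrite /eS uS b0S lex_adj_layer_eq.
  apply: connect_trans (IH _ (b0S _) erefl); apply: connect1.
  by rewrite /eS uS b0S /lex_adj um cyc_adj_layer eqxx.
have sym_eS : connect_sym eS.
  by apply: sym_connect_sym => x y; rewrite /eS lex_adj_sym andbCA andbA.
split; first by apply/set0Pn; exists (layer 0, b0).
move=> u w uS wS; apply: connect_trans (to_base _ _ uS (esym (layer_ord _))) _.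
by rewrite sym_eS (to_base _ _ wS (esym (layer_ord _))).
Qed.

Lemma exists_regular_clique d : d.+1 <= 2 * s ->
  exists S : {set V},
    [/\ induced_connected adj S, induced_regular adj S d, is_clique adj S & #|S| = d.+1].
Proof.
move=> d_le; have s_gt0 : 0 < s by lia.
pose f i :=
  if i == layer 1 then minn d.+1 s else if i == layer 2 then d.+1 - minn d.+1 s else 0.
have f_le i : f i <= s by rewrite /f; case: ifP => _; [|case: ifP => _]; lia.
have cl : is_clique adj (stack f).
  apply: (@layer_pair_clique _ 0); apply/subsetP => v; rewrite !inE /f.
  by case: (v.1 == layer 1) => //; case: (v.1 == layer 2).
have vS : (layer 1, Ordinal s_gt0) \in stack f by rewrite inE /f eqxx /=; lia.
have card_f : #|stack f| = d.+1.
  rewrite -(clique_nbr_card lex_adj_irr cl vS) (layer_degree vS erefl) /layer_window.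
  by rewrite !layer_card_stack // /f !(layer_neqE 0) !eqxx; lia.
exists (stack f); split=> //; last exact: clique_regular lex_adj_irr cl card_f.
by apply: clique_connected cl _; apply/set0Pn; exists (layer 1, Ordinal s_gt0).
Qed.

Definition third_part d i := (d.+3 - i %% 3) %/ 3.

Lemma third_part_sum d x y z : 3 %| d.+1 ->
  third_part d x + third_part d y + third_part d z = d.+1.
Proof. rewrite /third_part; lia. Qed.

Lemma third_part_consecutive d k :
  third_part d k + third_part d k.+1 + third_part d k.+2 = d.+1.
Proof. rewrite /third_part; lia. Qed.

Lemma third_part_window d k : 3 %| r * d.+1 ->
  third_part d (layer k) + third_part d (layer k.+1) + third_part d (layer k.+2) = d.+1.
Proof.
move=> dvd; have [/third_part_sum-> //|nd3] := boolP (3 %| d.+1).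
have r3 : 3 %| r by move: dvd; rewrite Euclid_dvdM // (negbTE nd3) orbF.
by rewrite /third_part /= !(modn_dvdm _ r3) -/(third_part _ _) third_part_consecutive.
Qed.

Lemma exists_regular_full d : 2 <= d -> d.+1 <= 3 * s -> 3 %| r * d.+1 ->
  exists S : {set V},
    [/\ induced_connected adj S, induced_regular adj S d,
        #|S| = r * d.+1 %/ 3 & every_vertex_adjacent adj S].
Proof.
move=> d_ge2 d_le dvd; pose f (i : 'I_r) := third_part d i.
have f_le i : f i <= s by rewrite /f /third_part; lia.
have f_gt0 i : 0 < f i by rewrite /f /third_part; lia.
have reg := stack_regular f_le (fun k => third_part_window k dvd).
have full i : 0 < layer_card (stack f) i by rewrite layer_card_stack.
have [_ [_ [_ [card_f adj_f]]]] := regular_full_layers reg full.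
by exists (stack f); split=> //; apply: stack_connected f_gt0; lia.
Qed.

End Layers.

Theorem lemma6 (r s : nat) (hr : 4 <= r) (hs : 1 <= s) :
  (forall (S : {set lexV r s}) (d : nat),
      induced_connected (@lex_adj r s) S ->
      induced_regular (@lex_adj r s) S d ->
      (is_clique (@lex_adj r s) S /\ #|S| = d.+1 /\ d.+1 <= 2 * s)
      \/
      (3 %| r * d.+1 /\ 2 <= d /\ d.+1 <= 3 * s /\
       #|S| = r * d.+1 %/ 3 /\ every_vertex_adjacent (@lex_adj r s) S))
  /\
  (forall d : nat, d.+1 <= 2 * s ->
      exists S : {set lexV r s},
        [/\ induced_connected (@lex_adj r s) S,
            induced_regular (@lex_adj r s) S d,
            is_clique (@lex_adj r s) S & #|S| = d.+1])
  /\
  (forall d : nat, 2 <= d -> d.+1 <= 3 * s -> 3 %| r * d.+1 ->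
      exists S : {set lexV r s},
        [/\ induced_connected (@lex_adj r s) S,
            induced_regular (@lex_adj r s) S d,
            #|S| = r * d.+1 %/ 3
          & every_vertex_adjacent (@lex_adj r s) S]).
Proof.
(* [hs] is unused: the existence parts get [0 < s] from their bounds on [d]. *)
have r_gt2 : 2 < r by exact: ltnW hr.
split; first exact: regular_connected_cases.
split; first exact: exists_regular_clique.
exact: exists_regular_full.
Qed.
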